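(* There exists a full amicable orthogonal design $AOD\big(72;\ 18,54;\ 72\big)$.
   Context: An orthogonal design $OD(m;c_1,\ldots,c_k)$ is an $m\times m$ matrix $X$ with entries from $\{0,\pm x_1,\ldots,\pm x_k\}$, where $x_1,\ldots,x_k$ are commuting indeterminates, such that $XX^{\rm T}=(\sum_j c_jx_j^2)I_m$. An amicable orthogonal design $AOD(m;c_1,\ldots,c_k;d_1,\ldots,d_\ell)$ is a pair $(X;Y)$ where $X$ is an $OD(m;c_1,\ldots,c_k)$ in indeterminates $x_1,\ldots,x_k$, $Y$ is an $OD(m;d_1,\ldots,d_\ell)$ in indeterminates $y_1,\ldots,y_\ell$ disjoint from the $x_i$, and $XY^{\rm T}=YX^{\rm T}$. It is full if neither $X$ nor $Y$ has a zero entry. *)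

From HB Require Import structures.
From mathcomp Require Import all_boot all_order all_algebra.
Set Implicit Arguments. Unset Strict Implicit. Unset Printing Implicit Defensive.
Import GRing.Theory.
Local Open Scope ring_scope.

(* An entry of a design in k indeterminates x_0..x_{k-1}:
   None = 0, Some (false, j) = + x_j, Some (true, j) = - x_j. *)
Definition dentry (k : nat) := option (bool * 'I_k).

Definition deval (R : nzRingType) (k : nat) (x : 'I_k -> R) (e : dentry k) : R :=
  match e with
  | None => 0
  | Some (b, j) => if b then - x j else x j
  end.

Definition devalmx (R : nzRingType) (m k : nat) (x : 'I_k -> R)
    (X : 'M[dentry k]_m) : 'M[R]_m :=
  map_mx (deval x) X.

(* X is an OD(m; c_1,...,c_k) (k = size c): X X^T = (sum_j c_j x_j^2) I_m
   as an identity in commuting indeterminates, i.e. under every assignment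
   of the indeterminates in every commutative ring. *)
Definition is_OD (m : nat) (c : seq nat) (X : 'M[dentry (size c)]_m) : Prop :=
  forall (R : comNzRingType) (x : 'I_(size c) -> R),
    devalmx x X *m (devalmx x X)^T
    = (\sum_(j < size c) (nth 0%N c j)%:R * x j ^+ 2)%:M.

Definition is_AOD (m : nat) (c d : seq nat)
    (X : 'M[dentry (size c)]_m) (Y : 'M[dentry (size d)]_m) : Prop :=
  [/\ is_OD X, is_OD Y &
      forall (R : comNzRingType) (x : 'I_(size c) -> R) (y : 'I_(size d) -> R),
        devalmx x X *m (devalmx y Y)^T = devalmx y Y *m (devalmx x X)^T].

Definition full_design (m k : nat) (X : 'M[dentry k]_m) : Prop :=
  forall i j, X i j <> None.

From mathcomp Require Import all_boot all_order all_algebra.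
From mathcomp Require Import ring mxtens.

(* Let W be the symmetric conference matrix of order 18 (the bordered Paley
   matrix of GF(17)), and let (A; C), (B; D) be AOD(4; 1,3; 4)'s with
   A B^T + B A^T = 0, C D^T + D C^T = 0 and A D^T + B C^T = C B^T + D A^T.
   Put X = A *t 1 + B *t W and Y = C *t 1 + D *t W.  Since W^T = W and
   W^2 = 17, X X^T = (A A^T + 17 B B^T) *t 1 + (A B^T + B A^T) *t W
   = 18 (x_1^2 + 3 x_2^2), and in the same way Y Y^T = 72 y^2 and
   X Y^T = Y X^T.  As W has zero diagonal and entries +-1 elsewhere, each
   entry of X (resp. Y) is +- an entry of A or B (resp. C or D), so X and Y
   are full. *)

Set Implicit Arguments. Unset Strict Implicit. Unset Printing Implicit Defensive.
Import GRing.Theory.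
Local Open Scope ring_scope.

Definition sign_entry k (b : bool) (e : dentry k) : dentry k :=
  if e is Some (b', j) then Some (b (+) b', j) else None.

Lemma deval_sign_entry (R : nzRingType) k (x : 'I_k -> R) b e :
  deval x (sign_entry b e) = (-1) ^+ b * deval x e.
Proof.
case: e => [[b' j]|] /=; last by rewrite mulr0.
by case: b; case: b'; rewrite /= ?expr0 ?expr1 ?mul1r ?mulN1r ?opprK.
Qed.

Section TensorAlgebra.

Variable R : comPzRingType.

Lemma tensmxDl m n p q (A B : 'M[R]_(m, n)) (C : 'M[R]_(p, q)) :
  (A + B) *t C = A *t C + B *t C.
Proof. by apply/matrixP => i j; rewrite !mxE mulrDl. Qed.

Lemma scalar_tensmx m n (a b : R) : a%:M *t b%:M = (a * b)%:M :> 'M_(m * n).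
Proof.
apply/matrixP => i j.
case: (mxtens_indexP i) => i1 i2; case: (mxtens_indexP j) => j1 j2.
rewrite tensmxE !mxE (inj_eq (can_inj (@mxtens_indexK m n))) xpair_eqE.
by case: eqP; case: eqP; rewrite ?mulr0n ?mulr1n ?mulr0 ?mul0r.
Qed.

Variables (m n : nat) (W : 'M[R]_n) (c : R).
Hypotheses (symW : W^T = W) (sqrW : W *m W = c%:M).

Lemma mul_tens_conference (A B C D : 'M[R]_m) :
  (A *t 1%:M + B *t W) *m (C *t 1%:M + D *t W)^T
  = (A *m C^T) *t 1%:M + (B *m D^T) *t c%:M + (A *m D^T + B *m C^T) *t W.
Proof.
rewrite linearD /= !trmx_tens tr_scalar_mx symW mulmxDl !mulmxDr !tensmx_mul.
rewrite !mulmx1 mul1mx sqrW tensmxDl -!addrA; congr (_ + _).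
by rewrite addrA addrC.
Qed.

End TensorAlgebra.

Definition sign_mx {R : pzRingType} n (S : 'M[bool]_n) : 'M[R]_n :=
  \matrix_(r, s) if r == s then 0 else (-1) ^+ S r s.

Definition symmetric_conference n (S : 'M[bool]_n.+1) : Prop :=
  S^T = S /\ sign_mx S *m sign_mx S = n%:R%:M :> 'M[int]_n.+1.

Section SymmetricConference.

Variables (n : nat) (S : 'M[bool]_n.+1).
Hypothesis confS : symmetric_conference S.

Lemma trmx_sign_mx (R : pzRingType) : (sign_mx S)^T = sign_mx S :> 'M[R]_n.+1.
Proof.
case: confS => symS _; apply/matrixP => r s.
by rewrite -{2}symS !mxE eq_sym.
Qed.

Lemma sqr_sign_mx (R : comPzRingType) :
  sign_mx S *m sign_mx S = n%:R%:M :> 'M[R]_n.+1.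
Proof.
have sign_mx_int : sign_mx S = map_mx intr (sign_mx S : 'M[int]_n.+1) :> 'M[R]_n.+1.
  by apply/matrixP => r s; rewrite !mxE; case: eqP; rewrite ?rmorph0 ?rmorph_sign.
case: confS => _ sqrS.
by rewrite sign_mx_int -map_mxM sqrS map_scalar_mx rmorph_nat.
Qed.

End SymmetricConference.

Definition tens_design k m n (A B : 'M[dentry k]_m) (S : 'M[bool]_n) :
    'M[dentry k]_(m * n) :=
  \matrix_(i, j) let: (p, r) := mxtens_unindex i in
                 let: (q, s) := mxtens_unindex j in
                 if r == s then A p q else sign_entry (S r s) (B p q).

Lemma devalmx_tens_design (R : comNzRingType) k m n (x : 'I_k -> R)
    (A B : 'M[dentry k]_m) (S : 'M[bool]_n) :
  devalmx x (tens_design A B S) = devalmx x A *t 1%:M + devalmx x B *t sign_mx S.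
Proof.
apply/matrixP => i j.
case: (mxtens_indexP i) => p r; case: (mxtens_indexP j) => q s.
rewrite !mxE !mxtens_indexK /=.
case: eqP => _; first by rewrite mulr1n mulr1 mulr0 addr0.
by rewrite deval_sign_entry mulr0n mulr0 add0r mulrC.
Qed.

Lemma full_tens_design k m n (A B : 'M[dentry k]_m) (S : 'M[bool]_n) :
  full_design A -> full_design B -> full_design (tens_design A B S).
Proof.
move=> fullA fullB i j.
case: (mxtens_indexP i) => p r; case: (mxtens_indexP j) => q s.
rewrite mxE !mxtens_indexK /=; case: eqP => _; first exact: fullA.
by case: (B p q) (fullB p q) => [[]|].
Qed.

Definition anti_amicable k m (X Y : 'M[dentry k]_m) : Prop :=
  forall (R : comNzRingType) (x : 'I_k -> R),
    devalmx x X *m (devalmx x Y)^T + devalmx x Y *m (devalmx x X)^T = 0.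

Definition amicable k l m (X : 'M[dentry k]_m) (Y : 'M[dentry l]_m) : Prop :=
  forall (R : comNzRingType) (x : 'I_k -> R) (y : 'I_l -> R),
    devalmx x X *m (devalmx y Y)^T = devalmx y Y *m (devalmx x X)^T.

Section TensorDesign.

Variables (n : nat) (S : 'M[bool]_n.+1).
Hypothesis confS : symmetric_conference S.

Let mul_tens_sign (R : comNzRingType) m :=
  @mul_tens_conference R m n.+1 _ _ (trmx_sign_mx confS R) (sqr_sign_mx confS R).

Lemma tens_design_OD (c : seq nat) m (A B : 'M[dentry (size c)]_m) :
    is_OD A -> is_OD B -> anti_amicable A B ->
  forall (R : comNzRingType) (x : 'I_(size c) -> R),
    devalmx x (tens_design A B S) *m (devalmx x (tens_design A B S))^T
    = (n.+1%:R * \sum_(j < size c) (nth 0%N c j)%:R * x j ^+ 2)%:M.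
Proof.
move=> odA odB antiAB R x.
rewrite devalmx_tens_design mul_tens_sign odA odB antiAB tens0mx addr0.
rewrite !scalar_tensmx -raddfD /=; congr _%:M.
by rewrite mulr1 [_ * n%:R]mulrC !mulr_natl mulrS.
Qed.

Lemma tens_design_amicable k l m (A B : 'M[dentry k]_m) (C D : 'M[dentry l]_m) :
    amicable A C -> amicable B D ->
    (forall (R : comNzRingType) (x : 'I_k -> R) (y : 'I_l -> R),
       devalmx x A *m (devalmx y D)^T + devalmx x B *m (devalmx y C)^T
       = devalmx y C *m (devalmx x B)^T + devalmx y D *m (devalmx x A)^T) ->
  amicable (tens_design A B S) (tens_design C D S).
Proof.
move=> amAC amBD cross R x y.
by rewrite !devalmx_tens_design !mul_tens_sign amAC amBD cross.
Qed.

End TensorDesign.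

Lemma all_iota_pairs n (P : nat -> nat -> bool) :
  all (fun r => all (P r) (iota 0 n)) (iota 0 n) -> forall r s : 'I_n, P r s.
Proof.
move=> /allP allP2 r s.
by apply: (allP (allP2 r _)); rewrite mem_iota /=.
Qed.

Definition quadratic_residue p (v : nat) : bool :=
  has (fun t => t * t == v %[mod p]) (iota 1 p.-1).

Definition paley_sign p (r s : nat) : bool :=
  [&& r != 0, s != 0 & ~~ quadratic_residue p (s + p - r)].

(* Off the first row and column, [true] marks a quadratic non-residue
   [s - r] modulo [p], i.e. the entry [-1] of the Jacobsthal matrix. *)
Definition paley_mx p : 'M[bool]_p.+1 := \matrix_(r, s) paley_sign p r s.

Lemma paley17_conference : symmetric_conference (paley_mx 17).
Proof.
pose entry (r s : nat) : int := if r == s then 0 else (-1) ^+ paley_sign 17 r s.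
split; apply/matrixP => r s; rewrite !mxE; apply/eqP.
  move: r s; apply: (all_iota_pairs (P := fun r s => paley_sign 17 s r == paley_sign 17 r s)).
  by vm_compute.
under eq_bigr do rewrite !mxE.
rewrite -(big_mkord xpredT (fun l => entry r l * entry l s)); move: r s.
apply: (all_iota_pairs
  (P := fun r s => \sum_(0 <= l < 18) entry r l * entry l s == 17%:R *+ (r == s))).
by rewrite unlock; vm_compute.
Qed.

Definition design_of_rows k m (rows : seq (seq (dentry k))) : 'M[dentry k]_m :=
  \matrix_(i, j) nth None (nth [::] rows i) j.

Definition pos k (j : 'I_k) : dentry k := Some (false, j).
Definition neg k (j : 'I_k) : dentry k := Some (true, j).

Definition xa : 'I_2 := ord0.
Definition xb : 'I_2 := lift ord0 ord0.
Definition y0 : 'I_1 := ord0.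

Definition A4 : 'M[dentry 2]_4 := design_of_rows 4
  [:: [:: neg xb; neg xb; neg xb; neg xa];
      [:: pos xa; neg xb; pos xb; neg xb];
      [:: pos xb; pos xa; neg xb; neg xb];
      [:: pos xb; neg xb; neg xa; pos xb]].

Definition B4 : 'M[dentry 2]_4 := design_of_rows 4
  [:: [:: pos xa; neg xb; pos xb; neg xb];
      [:: pos xb; pos xb; pos xb; pos xa];
      [:: pos xb; neg xb; neg xa; pos xb];
      [:: neg xb; neg xa; pos xb; pos xb]].

Definition C4 : 'M[dentry 1]_4 := design_of_rows 4
  [:: [:: pos y0; pos y0; pos y0; pos y0];
      [:: pos y0; pos y0; neg y0; neg y0];
      [:: pos y0; neg y0; pos y0; neg y0];
      [:: pos y0; neg y0; neg y0; pos y0]].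

Definition D4 : 'M[dentry 1]_4 := design_of_rows 4
  [:: [:: pos y0; pos y0; neg y0; neg y0];
      [:: neg y0; neg y0; neg y0; neg y0];
      [:: pos y0; neg y0; neg y0; pos y0];
      [:: neg y0; pos y0; neg y0; pos y0]].

Ltac entrywise_ring :=
  apply/matrixP; let i := fresh "i" in let j := fresh "j" in intros i j;
  rewrite ?mxE ?big_ord_recl ?big_ord0 ?mxE; revert i j;
  case=> [[|[|[|[|//]]]] ?]; case=> [[|[|[|[|//]]]] ?]; rewrite /=; ring.

Lemma A4_C4_AOD : @is_AOD 4 [:: 1%N; 3%N] [:: 4%N] A4 C4.
Proof. by split=> [R x | R y | R x y]; entrywise_ring. Qed.

Lemma B4_D4_AOD : @is_AOD 4 [:: 1%N; 3%N] [:: 4%N] B4 D4.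
Proof. by split=> [R x | R y | R x y]; entrywise_ring. Qed.

Lemma A4_B4_anti_amicable : anti_amicable A4 B4.
Proof. by move=> R x; entrywise_ring. Qed.

Lemma C4_D4_anti_amicable : anti_amicable C4 D4.
Proof. by move=> R y; entrywise_ring. Qed.

Lemma A4_B4_C4_D4_cross (R : comNzRingType) (x : 'I_2 -> R) (y : 'I_1 -> R) :
  devalmx x A4 *m (devalmx y D4)^T + devalmx x B4 *m (devalmx y C4)^T
  = devalmx y C4 *m (devalmx x B4)^T + devalmx y D4 *m (devalmx x A4)^T.
Proof. by entrywise_ring. Qed.

Lemma full_base_designs :
  [/\ full_design A4, full_design B4, full_design C4 & full_design D4].
Proof. by split=> -[[|[|[|[|//]]]] ?] -[[|[|[|[|//]]]] ?]; rewrite mxE. Qed.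

Theorem mainTheorem4 :
  exists (X : 'M[dentry (size [:: 18%N; 54%N])]_72)
         (Y : 'M[dentry (size [:: 72%N])]_72),
    is_AOD X Y /\ full_design X /\ full_design Y.
Proof.
have conf := paley17_conference.
have [odA odC amAC] := A4_C4_AOD.
have [odB odD amBD] := B4_D4_AOD.
have [fullA fullB fullC fullD] := full_base_designs.
exists (tens_design A4 B4 (paley_mx 17)), (tens_design C4 D4 (paley_mx 17)).
split; first split.
- move=> R x; rewrite (tens_design_OD conf odA odB A4_B4_anti_amicable).
  by rewrite !big_ord_recl !big_ord0 /=; congr _%:M; ring.
- move=> R y; rewrite (tens_design_OD conf odC odD C4_D4_anti_amicable).
  by rewrite !big_ord_recl !big_ord0 /=; congr _%:M; ring.
- move=> R x y.
  exact: (tens_design_amicable conf amAC amBD A4_B4_C4_D4_cross x y).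
- by split; [exact: (full_tens_design (S := paley_mx 17) fullA fullB)
            | exact: (full_tens_design (S := paley_mx 17) fullC fullD)].
Qed.
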